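(* Let $H=(V,E,C,\ell)$ be an edge-colored graph with $k$ colors, $x$ a feasible solution of the \textsc{MinECC} LP relaxation, $e=\{u,v\}\in E$ with color $c$ and $x_e=\max\{x_u^c,x_v^c\}$, and $z_0,z_1,\dots$ the color thresholds of $e$. Let $Y$ be the output of GenColorRound applied to $x$ with $I=(\frac12,\frac78)$. Suppose $x_e\in(\frac18,\frac12)$ and there are integers $1\le p\le q$ with $z_{p-1}\le\frac12\le z_p\le z_q\le\frac78\le z_{q+1}$. Then $p=1$, $q\le 6$, and $\Pr[e\in\mathcal M_Y]\le\frac83A_q\,x_e$, where $A_q$ is the optimal value of the linear program in real variables $\omega_1,\dots,\omega_6,\chi$: maximize $\frac{q}{q+1}\cdot\frac78\chi-\sum_{j=1}^q\frac{1}{j(j+1)}\omega_j$ subject to $\omega_i\le\omega_{i+1}$ for $i=1,\dots,5$; $\chi-\omega_1\le1$; $2\chi-\omega_2-\omega_3\le1$; $3\chi-3\omega_5\le1$; $\chi\ge 2$; $\omega_q\le\frac78\chi$.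
   Context: An edge-colored graph is $H=(V,E,C,\ell)$ with colors $C=[k]$, $\ell\colon E\to C$, where every edge is a set of exactly two nodes. A node coloring $Y\colon V\to C$ makes a mistake at $e$ ($e\in\mathcal M_Y$) if some $w\in e$ has $Y[w]\ne\ell(e)$. The \textsc{MinECC} LP relaxation constraints: $\sum_{i=1}^k x_w^i=k-1$ for all $w\in V$; $x_e\ge x_w^{\ell(e)}$ for $w\in e$; $0\le x_w^i\le1$; $0\le x_e\le 1$. Color thresholds of $e$ with color $c$: for $j\in C\setminus\{c\}$ let $m_j=\min_{w\in e}x_w^j$, sorted as $m_{(1)}\le\dots\le m_{(k-1)}$; $z_0=0$, $z_i=m_{(i)}$ for $1\le i\le k-1$, and by convention $z_i=1$ for $i\ge k$. GenColorRound with interval $I$, applied to $x$: draw $\rho$ uniformly from $I$ and, independently, a uniformly random permutation $\pi$ of $[k]$; let $S_i=\{w: x_w^i<\rho\}$; for $w\in\bigcup_iS_i$ set $Y[w]=\pi(j)$ with $j$ the largest index such that $w\in S_{\pi(j)}$; other nodes get an arbitrary color. *)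

From HB Require Import structures.
From mathcomp Require Import all_boot all_order all_algebra all_fingroup.
From mathcomp Require Import all_classical all_reals all_analysis.
Set Implicit Arguments. Unset Strict Implicit. Unset Printing Implicit Defensive.
Import Order.TTheory GRing.Theory Num.Theory.
Local Open Scope ring_scope.
Local Open Scope classical_set_scope.

(* Edge-colored graph H = (V, E, C, l) with colors C = 'I_k (i.e. [k], 0-based).
   Edges are sets of nodes of cardinality exactly 2; l gives the color of an edge. *)
Definition is_edge_colored_graph (V : finType) (E : {set {set V}}) : Prop :=
  forall e, e \in E -> #|e| = 2%N.

(* Feasibility for the MinECC LP relaxation.
   xn w i = x_w^i,  xe e = x_e. *)
Definition minecc_feasible (R : realType) (V : finType) (k : nat)
    (E : {set {set V}}) (l : {set V} -> 'I_k)
    (xn : V -> 'I_k -> R) (xe : {set V} -> R) : Prop :=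
  [/\ (forall w, \sum_(i < k) xn w i = (k - 1)%:R),
      (forall e w, e \in E -> w \in e -> xn w (l e) <= xe e),
      (forall w i, 0 <= xn w i <= 1)
    & (forall e, e \in E -> 0 <= xe e <= 1)].

Definition color_thresholds (R : realType) (V : finType) (k : nat)
    (xn : V -> 'I_k -> R) (u v : V) (c : 'I_k) (i : nat) : R :=
  if i == 0%N then 0
  else if (i <= k - 1)%N then
    nth 0 (sort <=%R [seq Num.min (xn u j) (xn v j) | j <- enum 'I_k & j != c])
        i.-1
  else 1.

(* GenColorRound output for threshold rho and permutation pi; the nodes not in
   any S_i receive the (arbitrary) color dflt w. *)
Definition gen_color_round (R : realType) (V : finType) (k : nat)
    (xn : V -> 'I_k -> R) (dflt : V -> 'I_k) (rho : R) (pi : {perm 'I_k})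
    (w : V) : 'I_k :=
  match [pick j : 'I_k | (xn w (pi j) < rho) &&
            [forall j' : 'I_k, (j < j')%N ==> ~~ (xn w (pi j') < rho)]] with
  | Some j => pi j
  | None => dflt w
  end.

Definition mistake (V : finType) (k : nat) (l : {set V} -> 'I_k)
    (Y : V -> 'I_k) (e : {set V}) : bool :=
  [exists w in e, Y w != l e].

(* Pr[e in M_Y] for GenColorRound with interval I = (a, b):
   rho uniform on (a,b), pi uniform on permutations of [k], independent. *)
Definition prob_mistake (R : realType) (V : finType) (k : nat)
    (l : {set V} -> 'I_k) (xn : V -> 'I_k -> R) (dflt : V -> 'I_k)
    (a b : R) (e : {set V}) : \bar R :=
  ((\sum_(pi : {perm 'I_k})
      (lebesgue_measure
         [set rho : R | (a < rho < b)%R /\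
            mistake l (gen_color_round xn dflt rho pi) e]
       * ((b - a)^-1)%:E))
   * ((#|{perm 'I_k}|%:R)^-1)%:E)%E.

(* The LP defining A_q, variables omega_1..omega_6 (omega : nat -> R, only
   indices 1..6 used) and chi. *)
Definition Aq_feasible (R : realType) (q : nat) (om : nat -> R) (chi : R) : Prop :=
  (forall i, (1 <= i <= 5)%N -> om i <= om i.+1) /\
  chi - om 1%N <= 1 /\
  2 * chi - om 2%N - om 3%N <= 1 /\
  3 * chi - 3 * om 5%N <= 1 /\
  2 <= chi /\
  om q <= 7 / 8 * chi.

Definition Aq_objective (R : realType) (q : nat) (om : nat -> R) (chi : R) : R :=
  q%:R / q.+1%:R * (7 / 8) * chi
  - \sum_(1 <= j < q.+1) (j%:R * j.+1%:R)^-1 * om j.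

Definition Aq (R : realType) (q : nat) : R :=
  sup [set y : R | exists om chi, Aq_feasible q om chi /\ y = Aq_objective q om chi].

From HB Require Import structures.
From mathcomp Require Import all_boot all_order all_algebra all_fingroup.
From mathcomp Require Import all_classical all_reals all_analysis.
From mathcomp Require Import ring lra zify.
Set Implicit Arguments. Unset Strict Implicit. Unset Printing Implicit Defensive.
Import Order.TTheory GRing.Theory Num.Theory.

(* Write X = x_e, c for the colour of e and z_j for its thresholds.  Since the
   x_w^i sum to k - 1, the deficits 1 - x_w^j (j <> c) at an endpoint w sum to at
   most x_w^c <= X.  Hence z_j >= 1 - X > 1/2 for j >= 1, which forces p = 1; two
   colours whose minimum is attained at the same endpoint give
   (1 - z_a) + (1 - z_b) <= X, and splitting the n cheapest colours into a at u
   and b at v gives a (1 - z_n) <= X and b (1 - z_n) <= X.  These are the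
   constraints making (z_j / X, 1 / X) feasible for the LP of A_q, and for n = 7
   they show q <= 6.
   If e is a mistake then rho > z_(J+1), where J is the position, in threshold
   order, of the first colour that pi ranks after c.  The event J <= i has
   probability (i+1)/(i+2), and summation by parts turns the resulting bound
   into 8/3 * X times the LP objective at (z_j / X, 1 / X). *)

Section RandomOrder.
Variable k : nat.

Definition rank_max (pi : {perm 'I_k}) (T : seq 'I_k) (t : 'I_k) : bool :=
  all (fun d => ((pi^-1)%g d <= (pi^-1)%g t)%N) T.

Lemma rank_max_tperm (T : seq 'I_k) (c t : 'I_k) (pi : {perm 'I_k}) :
  c \in T -> t \in T -> rank_max (pi * tperm c t)%g T c = rank_max pi T t.
Proof.
move=> cT tT.
have invE (x : 'I_k) : ((pi * tperm c t)^-1)%g x = (pi^-1)%g (tperm c t x).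
  by rewrite invMg permM tpermV.
have tperm_in (d : 'I_k) : d \in T -> tperm c t d \in T.
  by move=> dT; case: tpermP.
apply/allP/allP => H d dT /=.
- by move: (H _ (tperm_in d dT)); rewrite /= !invE tpermK tpermL.
- by rewrite !invE tpermL; exact: H (tperm_in d dT).
Qed.

Lemma card_rank_max (T : seq 'I_k) (c t : 'I_k) : c \in T -> t \in T ->
  #|[pred pi | rank_max pi T c]| = #|[pred pi | rank_max pi T t]|.
Proof.
move=> cT tT.
have inj_mul : injective (fun pi : {perm 'I_k} => (pi * tperm c t)%g) by move=> ? ? /mulIg.
rewrite -(card_imset [pred pi | rank_max pi T c] inj_mul).
apply: eq_card => pi; rewrite inE /=.
apply/imsetP/idP => [[s sin ->]|H].
  by rewrite tpermC rank_max_tperm //; rewrite inE in sin.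
exists (pi * tperm c t)%g; last by rewrite -mulgA tperm2 mulg1.
by rewrite inE /= rank_max_tperm.
Qed.

Lemma count_rank_max (T : seq 'I_k) (c : 'I_k) (pi : {perm 'I_k}) :
  uniq T -> c \in T -> count (rank_max pi T) T = 1%N.
Proof.
move=> uT cT.
case: (@arg_maxnP _ c (mem T) (fun t => (pi^-1)%g t : nat) cT) => t0 t0T Ht0.
rewrite (@eq_in_count _ _ (pred1 t0)); first by rewrite count_uniq_mem // (t0T : t0 \in T).
move=> t tT /=; apply/idP/eqP => [H|->]; last by apply/allP => d dT; exact: Ht0.
have le_t0 : ((pi^-1)%g t0 <= (pi^-1)%g t)%N by move/allP: H; apply.
apply: (@perm_inj _ (pi^-1)%g); apply: val_inj => /=; apply/eqP.
by rewrite eqn_leq le_t0 andbT; exact: Ht0.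
Qed.

(* Each of the (size S).+1 elements of c :: S is last in the same number of orders. *)
Lemma card_rank_max_cons (c : 'I_k) (S : seq 'I_k) : uniq (c :: S) ->
  (#|[pred pi : {perm 'I_k} | rank_max pi S c]| * (size S).+1 = #|{perm 'I_k}|)%N.
Proof.
move=> uT; set T := c :: S.
have cT : c \in T by rewrite inE eqxx.
have -> : #|[pred pi : {perm 'I_k} | rank_max pi S c]| = #|[pred pi | rank_max pi T c]|.
  by apply: eq_card => pi; rewrite !inE /rank_max /= leqnn.
have -> : #|{perm 'I_k}| = (\sum_(pi : {perm 'I_k}) count (rank_max pi T) T)%N.
  by rewrite -sum1_card; apply: eq_bigr => pi _; rewrite (count_rank_max _ _ cT).
have -> : (\sum_(pi : {perm 'I_k}) count (rank_max pi T) T =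
           \sum_(t <- T) #|[pred pi | rank_max pi T t]|)%N.
  rewrite (eq_bigr (fun pi => \sum_(t <- T) (if rank_max pi T t then 1 else 0))%N); last first.
    by move=> pi _; rewrite -big_mkcond sum1_count.
  rewrite exchange_big /=; apply: eq_bigr => t _.
  by rewrite -big_mkcond -sum1_card; apply: eq_bigl => pi; rewrite !inE.
rewrite (eq_big_seq (fun _ => #|[pred pi | rank_max pi T c]|)); last first.
  by move=> t tT; rewrite (card_rank_max cT tT).
by rewrite big_const_seq count_predT iter_addn_0 mulnC.
Qed.

Definition first_after (pi : {perm 'I_k}) (c : 'I_k) (cs : seq 'I_k) : nat :=
  find (fun d => ((pi^-1)%g c < (pi^-1)%g d)%N) cs.

Lemma card_first_after_le (c : 'I_k) (cs : seq 'I_k) (i : nat) :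
  uniq cs -> c \notin cs -> (i < size cs)%N ->
  (#|[pred pi | first_after pi c cs <= i]| * i.+2 = #|{perm 'I_k}| * i.+1)%N.
Proof.
move=> ucs ccs hi.
set P := [pred pi | _].
have cardPC : #|[predC P]| = #|[pred pi : {perm 'I_k} | rank_max pi (take i.+1 cs) c]|.
  apply: eq_card => pi; rewrite !inE /= /first_after -ltnS -has_take_leq //.
  by rewrite -all_predC; apply: eq_all => d /=; rewrite -leqNgt.
have uc : uniq (c :: take i.+1 cs).
  by rewrite /= take_uniq // andbT; apply: contra ccs; apply: mem_take.
have cardC_last := card_rank_max_cons uc; rewrite size_takel // -cardPC in cardC_last.
have cardP_split : (#|P| + #|[predC P]| = #|{perm 'I_k}|)%N := cardC P.
nia.
Qed.

End RandomOrder.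

Local Open Scope ring_scope.

Lemma sum_indicator_diff (R : comPzRingType) (s : nat -> R) (n J : nat) :
  \sum_(i < n) ((J <= i)%N%:R * (s i.+1 - s i)) = s n - s (minn J n).
Proof.
elim: n => [|n IH]; first by rewrite big_ord0 minn0 subrr.
rewrite big_ord_recr /= IH.
case: (leqP J n) => h.
  by rewrite (minn_idPl (leqW h)) mul1r; ring.
by rewrite (minn_idPr h) mul0r addr0 !subrr.
Qed.

Lemma sum_diff_mul_ratio (R : numFieldType) (s : nat -> R) (q : nat) :
  \sum_(i < q) (s i.+1 - s i) * (i.+1%:R / i.+2%:R)
  = s q * (q%:R / q.+1%:R) - \sum_(1 <= j < q.+1) (j%:R * j.+1%:R)^-1 * s j.-1.
Proof.
elim: q => [|q IH]; first by rewrite big_ord0 big_geq // mul0r mulr0 subrr.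
rewrite big_ord_recr /= IH [in RHS]big_nat_recr //=.
have -> : q.+2%:R = q%:R + 2 :> R by rewrite -addn2 natrD.
rewrite -natr1.
have q1 : q%:R + 1 != 0 :> R by rewrite natr1 pnatr_eq0.
have q2 : q%:R + 2 != 0 :> R by rewrite -natrD pnatr_eq0 addn2.
by field; rewrite q1 q2.
Qed.

Lemma Aq_objective_ub (R : realType) (q : nat) (om : nat -> R) (chi : R) :
  (1 <= q <= 6)%N -> Aq_feasible q om chi -> Aq_objective q om chi <= 7.
Proof.
move=> /andP[q1 q6] [mon [c1 [c2 [c3 [c4 c5]]]]].
have om1_le j : (1 <= j <= 6)%N -> om 1%N <= om j.
  have := (mon 1%N erefl, mon 2%N erefl, mon 3%N erefl, mon 4%N erefl, mon 5%N erefl).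
  by case: j => [|[|[|[|[|[|[|j]]]]]]] //= [[[[? ?] ?] ?] ?] _; lra.
have sum_ge0 : 0 <= \sum_(1 <= j < q.+1) (j%:R * j.+1%:R)^-1 * om j.
  rewrite big_nat; apply: sumr_ge0 => j /andP[j1]; rewrite ltnS => jq.
  apply: mulr_ge0; first by rewrite invr_ge0 mulr_ge0.
  by have := om1_le j; rewrite j1 (leq_trans jq q6); lra.
have chi_le8 : chi <= 8 by have := om1_le q; rewrite q1 q6; lra.
have ratio_le1 : q%:R / q.+1%:R <= 1 :> R.
  by rewrite ler_pdivrMr ?ltr0n // mul1r ler_nat.
have ratio_ge0 : 0 <= q%:R / q.+1%:R :> R by rewrite divr_ge0.
rewrite /Aq_objective; set a := q%:R / q.+1%:R in ratio_le1 ratio_ge0 *.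
nra.
Qed.

Lemma Aq_objective_le_Aq (R : realType) (q : nat) (om : nat -> R) (chi : R) :
  (1 <= q <= 6)%N -> Aq_feasible q om chi -> Aq_objective q om chi <= Aq R q.
Proof.
move=> hq hf; apply: ub_le_sup; last by exists om, chi.
by exists 7 => y [om' [chi' [hf' ->]]]; exact: Aq_objective_ub hf'.
Qed.

Section NodeDeficit.
Variables (R : realFieldType) (V : finType) (k : nat) (xn : V -> 'I_k -> R).
Hypothesis xn_sum : forall w, \sum_(i < k) xn w i = (k - 1)%:R.
Hypothesis xn_box : forall w i, 0 <= xn w i <= 1.

(* The total deficit [\sum_i (1 - x_w^i)] is exactly 1. *)
Lemma sum_compl_le (w : V) (c : 'I_k) (D : {set 'I_k}) :
  c \notin D -> \sum_(j in D) (1 - xn w j) <= xn w c.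
Proof.
move=> cD.
have k_gt0 : (0 < k)%N by apply: leq_ltn_trans (ltn_ord c).
have sum_compl : \sum_(i < k) (1 - xn w i) = 1.
  by rewrite sumrB xn_sum sumr_const card_ord natrB // -natr1; ring.
have compl_ge0 i : 0 <= 1 - xn w i by have := xn_box w i; lra.
suff : \sum_(j in D) (1 - xn w j) + (1 - xn w c) <= \sum_(i < k) (1 - xn w i).
  by rewrite sum_compl; lra.
rewrite [X in _ <= X](bigID (mem D)) /= lerD // (bigD1 c) //= lerDl.
exact: sumr_ge0.
Qed.

Lemma card_mul_compl_le (w : V) (c : 'I_k) (D : {set 'I_k}) (t : R) :
  c \notin D -> (forall d, d \in D -> xn w d <= t) -> #|D|%:R * (1 - t) <= xn w c.
Proof.
move=> cD le_t; apply: le_trans (sum_compl_le w cD).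
rewrite mulrC mulr_natr -sumr_const; apply: ler_sum => d dD.
by have := le_t d dD; lra.
Qed.

Lemma compl_le (w : V) (c d : 'I_k) : d != c -> 1 - xn w d <= xn w c.
Proof.
move=> dc; have cD : c \notin [set d] by rewrite inE eq_sym.
by have := sum_compl_le w cD; rewrite big_set1.
Qed.

Lemma compl2_le (w : V) (c a b : 'I_k) :
  a != b -> a != c -> b != c -> (1 - xn w a) + (1 - xn w b) <= xn w c.
Proof.
move=> ab ac bc; have cD : c \notin [set a; b] by rewrite !inE negb_or !(eq_sym c) ac bc.
by have := sum_compl_le w cD; rewrite big_setU1 ?big_set1 //= inE.
Qed.

End NodeDeficit.

Section Thresholds.
Variables (R : realType) (V : finType) (k : nat) (xn : V -> 'I_k -> R).
Variables (u v : V) (c : 'I_k).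

Definition mincol (j : 'I_k) : R := Num.min (xn u j) (xn v j).

Definition sorted_colors : seq 'I_k :=
  sort (relpre mincol <=%R) [seq j <- enum 'I_k | j != c].

Local Notation z := (color_thresholds xn u v c).

Lemma size_enum_neq : size [seq j <- enum 'I_k | j != c] = (k - 1)%N.
Proof.
rewrite subn1; have := cardC1 c; rewrite card_ord => <-; rewrite cardE /enum_mem.
by rewrite !size_filter count_filter; apply: eq_count => x /=; rewrite !inE andbT.
Qed.

Lemma size_sorted_colors : size sorted_colors = (k - 1)%N.
Proof. by rewrite size_sort size_enum_neq. Qed.

Lemma sorted_colors_uniq : uniq sorted_colors.
Proof. by rewrite sort_uniq filter_uniq // enum_uniq. Qed.

Lemma mem_sorted_colors (d : 'I_k) : (d \in sorted_colors) = (d != c).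
Proof. by rewrite mem_sort mem_filter mem_enum andbT. Qed.

Lemma color_thresholdsS (i : nat) : (i < k - 1)%N ->
  z i.+1 = mincol (nth c sorted_colors i).
Proof.
move=> ik; rewrite /color_thresholds /= ik sort_map (nth_map c) //.
by rewrite size_sorted_colors.
Qed.

Lemma color_thresholds_out (i : nat) : (k - 1 < i)%N -> z i = 1.
Proof.
by case: i => // i ik; rewrite /color_thresholds /= leqNgt ik.
Qed.

Lemma threshold_lt1_index (i : nat) : z i < 1 -> (i <= k - 1)%N.
Proof. by rewrite leqNgt; apply: contraTN => /color_thresholds_out ->; rewrite ltxx. Qed.

Hypothesis xn_le1 : forall w j, xn w j <= 1.

Lemma color_thresholds_le1 (i : nat) : z i <= 1.
Proof.
case: i => [|i]; first by rewrite /color_thresholds ler01.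
case: (ltnP i (k - 1)) => ik; last by rewrite color_thresholds_out.
by rewrite color_thresholdsS // ge_min xn_le1.
Qed.

Lemma color_thresholds_homo (i j : nat) : (1 <= i <= j)%N -> z i <= z j.
Proof.
case: i => // i /= ij; case: j ij => // j ij.
case: (ltnP j (k - 1)) => jk; last by rewrite [z j.+1]color_thresholds_out ?ltnS // color_thresholds_le1.
have ik : (i < k - 1)%N by apply: leq_ltn_trans jk.
rewrite /color_thresholds /= ik jk.
apply: (sorted_leq_nth le_trans le_refl); rewrite ?inE ?size_sort ?size_map ?size_enum_neq //.
by apply: sort_sorted; exact: le_total.
Qed.

End Thresholds.

Section EdgeThresholds.
Variables (R : realType) (V : finType) (k : nat) (xn : V -> 'I_k -> R).
Hypothesis xn_sum : forall w, \sum_(i < k) xn w i = (k - 1)%:R.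
Hypothesis xn_box : forall w i, 0 <= xn w i <= 1.
Variables (u v : V) (c : 'I_k) (X : R).
Hypotheses (xuc : xn u c <= X) (xvc : xn v c <= X).

Local Notation z := (color_thresholds xn u v c).
Local Notation cs := (sorted_colors xn u v c).

Let xn_le1 w j : xn w j <= 1. Proof. by case/andP: (xn_box w j). Qed.

Let X_ge0 : 0 <= X. Proof. by case/andP: (xn_box u c) => ? _; apply: le_trans xuc. Qed.

Let nth_neq (i : nat) : (i < k - 1)%N -> nth c cs i != c.
Proof. by move=> ik; rewrite -(mem_sorted_colors xn u v) mem_nth ?size_sorted_colors. Qed.

Lemma mincol_ge (d : 'I_k) : d != c -> 1 - X <= mincol xn u v d.
Proof.
move=> dc; have hu := compl_le xn_sum xn_box u dc; have hv := compl_le xn_sum xn_box v dc.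
have xu := xuc; have xv := xvc.
by rewrite /mincol le_min; apply/andP; split; lra.
Qed.

Lemma one_sub_le_threshold (i : nat) : (1 <= i)%N -> 1 - X <= z i.
Proof.
case: i => // i _; case: (ltnP i (k - 1)) => ik.
  by rewrite color_thresholdsS //; apply/mincol_ge/nth_neq.
by rewrite color_thresholds_out //; have := X_ge0; lra.
Qed.

(* Colours whose minimum is attained at u charge the deficit of u, the others that of v. *)
Lemma split_endpoints (n : nat) : (n <= k - 1)%N ->
  exists a b : nat, [/\ (a + b = n)%N, a%:R * (1 - z n) <= X & b%:R * (1 - z n) <= X].
Proof.
move=> nk.
pose D := [set d in take n cs].
pose Du := [set d in D | xn u d <= xn v d].
pose Dv := [set d in D | ~~ (xn u d <= xn v d)].
have cD : c \notin D by rewrite inE; apply/negP => /mem_take; rewrite mem_sorted_colors eqxx.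
have le_zn d : d \in D -> mincol xn u v d <= z n.
  rewrite inE => dD; set i := index d (take n cs).
  have iD : (i < size (take n cs))%N by rewrite index_mem.
  have iD' : (i < n)%N by apply: leq_trans iD _; rewrite size_take geq_minl.
  have <- : nth c cs i = d by rewrite -(nth_take _ iD') nth_index.
  rewrite -color_thresholdsS; last exact: leq_trans iD' nk.
  exact: color_thresholds_homo.
exists #|Du|, #|Dv|; split.
- have -> : #|Du| = #|[predI D & (fun d => xn u d <= xn v d)]|.
    by apply: eq_card => d; rewrite !inE.
  have -> : #|Dv| = #|[predD D & (fun d => xn u d <= xn v d)]|.
    by apply: eq_card => d; rewrite !inE andbC.
  rewrite cardID cardsE (card_uniqP (take_uniq _ (sorted_colors_uniq _ _ _ _))).
  by rewrite size_takel // size_sorted_colors.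
- apply: (le_trans _ xuc); apply: (card_mul_compl_le xn_sum xn_box (D := Du)).
    by apply: contra cD => /setIdP[].
  by move=> d /setIdP[dD le_uv]; have := le_zn d dD; rewrite /mincol min_l.
- apply: (le_trans _ xvc); apply: (card_mul_compl_le xn_sum xn_box (D := Dv)).
    by apply: contra cD => /setIdP[].
  move=> d /setIdP[dD le_vu]; have := le_zn d dD.
  by rewrite /mincol min_r // ltW // ltNge.
Qed.

Let z_homo (i j : nat) : (1 <= i <= j)%N -> z i <= z j.
Proof. exact: color_thresholds_homo. Qed.

Lemma mincol_same_side_le (a b : 'I_k) : a != b -> a != c -> b != c ->
  (xn u a <= xn v a) = (xn u b <= xn v b) ->
  (1 - mincol xn u v a) + (1 - mincol xn u v b) <= X.
Proof.
move=> ab ac bc; rewrite /mincol; case: (boolP (xn u a <= xn v a)) => ha same.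
  rewrite (min_l ha) (min_l (esym same)).
  exact: le_trans (compl2_le xn_sum xn_box u ab ac bc) xuc.
have hb : ~~ (xn u b <= xn v b) by rewrite -same.
have ha' : xn v a <= xn u a by rewrite ltW // ltNge.
have hb' : xn v b <= xn u b by rewrite ltW // ltNge.
rewrite (min_r ha') (min_r hb').
exact: le_trans (compl2_le xn_sum xn_box v ab ac bc) xvc.
Qed.

(* Two of the three cheapest colours have their minimum at the same endpoint. *)
Lemma thresholds23_le : 2 - z 2 - z 3 <= X.
Proof.
have z12 := z_homo (i := 1) (j := 2) erefl; have z23 := z_homo (i := 2) (j := 3) erefl.
case: (ltnP 2 (k - 1)) => k3; last first.
  rewrite [z 3]color_thresholds_out //; have := one_sub_le_threshold (i := 2) erefl; lra.
have ucs := sorted_colors_uniq xn u v c.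
have szs := size_sorted_colors xn u v c.
have lt0 : (0 < size cs)%N by rewrite szs; apply: leq_trans k3.
have lt1 : (1 < size cs)%N by rewrite szs; apply: leq_trans k3.
have lt2 : (2 < size cs)%N by rewrite szs.
have z1E := color_thresholdsS xn u v c (i := 0) (ltnW (ltnW k3)).
have z2E := color_thresholdsS xn u v c (i := 1) (ltnW k3).
have z3E := color_thresholdsS xn u v c (i := 2) k3.
have n0 := nth_neq (i := 0) (ltnW (ltnW k3)).
have n1 := nth_neq (i := 1) (ltnW k3).
have n2 := nth_neq (i := 2) k3.
have d01 : nth c cs 0 != nth c cs 1 by rewrite nth_uniq.
have d02 : nth c cs 0 != nth c cs 2 by rewrite nth_uniq.
have d12 : nth c cs 1 != nth c cs 2 by rewrite nth_uniq.
set b0 := xn u (nth c cs 0) <= xn v (nth c cs 0).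
set b1 := xn u (nth c cs 1) <= xn v (nth c cs 1).
set b2 := xn u (nth c cs 2) <= xn v (nth c cs 2).
have : [|| b0 == b1, b0 == b2 | b1 == b2] by case: b0; case: b1; case: b2.
case/or3P => /eqP same.
- have := mincol_same_side_le d01 n0 n1 same; rewrite -z1E -z2E; lra.
- have := mincol_same_side_le d02 n0 n2 same; rewrite -z1E -z3E; lra.
- have := mincol_same_side_le d12 n1 n2 same; rewrite -z2E -z3E; lra.
Qed.

Lemma thresholds5_le : 3 - 3 * z 5 <= X.
Proof.
have z5_le1 : z 5 <= 1 := color_thresholds_le1 u v c xn_le1 5.
case: (leqP 5 (k - 1)) => k5; last first.
  by rewrite color_thresholds_out //; have := X_ge0; lra.
have [a [b [ab ha hb]]] := split_endpoints k5.
suff [m m3 hm] : exists2 m : nat, (3 <= m)%N & m%:R * (1 - z 5) <= X.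
  have : (3 : R) <= m%:R by rewrite (ler_nat R 3 m).
  by nra.
by case: (leqP 3 a) => a3; [exists a | exists b => //; lia].
Qed.

Lemma index_le6_of_threshold (q : nat) : X < 1 / 2 -> z q <= 7 / 8 -> (q <= 6)%N.
Proof.
move=> X_lt zq; rewrite leqNgt; apply/negP => q7.
have qk : (q <= k - 1)%N by apply: threshold_lt1_index; lra.
have [a [b [ab ha hb]]] := split_endpoints (leq_trans q7 qk).
have z7 : z 7 <= 7 / 8 by apply: le_trans zq; apply: z_homo; rewrite q7.
have small (m : nat) : m%:R * (1 - z 7) <= X -> (m < 4)%N.
  move=> hm; rewrite -(ltr_nat R); have := ler0n R m; nra.
by have := small a ha; have := small b hb; lia.
Qed.

Lemma Aq_feasible_thresholds (q : nat) : 0 < X -> X <= 1 / 2 -> z q <= 7 / 8 ->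
  Aq_feasible q (fun j => z j / X) X^-1.
Proof.
move=> X_gt0 X_le zq.
have Xinv_gt0 : 0 < X^-1 by rewrite invr_gt0.
have divX_le (y : R) : y <= X -> y / X <= 1 by move=> ?; rewrite ler_pdivrMr // mul1r.
split; [|split; [|split; [|split; [|split]]]].
- by move=> i /andP[i1 i5]; rewrite ler_pM2r //; apply: z_homo; rewrite i1 /=.
- have -> : X^-1 - z 1 / X = (1 - z 1) / X by ring.
  by apply: divX_le; have := one_sub_le_threshold (i := 1) erefl; lra.
- have -> : 2 * X^-1 - z 2 / X - z 3 / X = (2 - z 2 - z 3) / X by ring.
  exact/divX_le/thresholds23_le.
- have -> : 3 * X^-1 - 3 * (z 5 / X) = (3 - 3 * z 5) / X by ring.
  exact/divX_le/thresholds5_le.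
- by rewrite -(ler_pM2r X_gt0) mulVf ?gt_eqF //; lra.
- by rewrite ler_pM2r.
Qed.

End EdgeThresholds.

Definition capped (R : numDomainType) (b : R) (z : nat -> R) (q i : nat) : R :=
  if (i < q)%N then z i.+1 else b.

Definition threshold_bound (R : numDomainType) (b : R) (z : nat -> R) (q : nat) : R :=
  q%:R / q.+1%:R * b - \sum_(1 <= j < q.+1) (j%:R * j.+1%:R)^-1 * z j.

Lemma Aq_objective_div (R : realType) (q : nat) (z : nat -> R) (X : R) :
  Aq_objective q (fun j => z j / X) X^-1 = threshold_bound (7 / 8) z q / X.
Proof.
rewrite /Aq_objective /threshold_bound mulrBl mulr_suml.
by congr (_ - _); apply: eq_bigr => j _; rewrite mulrA.
Qed.

Lemma sum_perm_capped (R : numFieldType) (k : nat) (b : R) (z : nat -> R) (q : nat)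
    (c : 'I_k) (cs : seq 'I_k) :
  uniq cs -> c \notin cs -> (q <= size cs)%N ->
  \sum_(pi : {perm 'I_k}) (b - capped b z q (first_after pi c cs))
  = #|{perm 'I_k}|%:R * threshold_bound b z q.
Proof.
move=> ucs ccs qcs; set s := capped b z q.
have sq : s q = b by rewrite /s /capped ltnn.
have diff_sum pi : b - s (first_after pi c cs)
    = \sum_(i < q) (first_after pi c cs <= i)%N%:R * (s i.+1 - s i).
  rewrite sum_indicator_diff sq; case: leqP => // qJ.
  by rewrite /s /capped ltnNge (ltnW qJ) ltnn.
have card_le i : (i < q)%N ->
    \sum_(pi : {perm 'I_k}) ((first_after pi c cs <= i)%N%:R : R)
    = #|{perm 'I_k}|%:R * (i.+1%:R / i.+2%:R).
  move=> iq; have := card_first_after_le ucs ccs (leq_trans iq qcs).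
  rewrite -natr_sum -big_mkcond sum1_card mulrA => /(congr1 (fun n => n%:R : R)).
  by rewrite !natrM => <-; rewrite mulfK ?pnatr_eq0.
have -> : threshold_bound b z q = \sum_(i < q) (s i.+1 - s i) * (i.+1%:R / i.+2%:R).
  rewrite sum_diff_mul_ratio sq /threshold_bound; congr (_ - _); first by rewrite mulrC.
  rewrite !big_nat; apply: eq_bigr => j /andP[j1 jq].
  by case: j j1 jq => // j _ jq; rewrite /s /capped -ltnS jq.
rewrite (eq_bigr _ (fun pi _ => diff_sum pi)) exchange_big mulr_sumr.
by apply: eq_bigr => i _; rewrite -mulr_suml card_le ?ltn_ord //; ring.
Qed.

Lemma lebesgue_measure_sub_itv (R : realType) (A : set R) (x y : R) : x <= y ->
  (A `<=` `]x, y[)%classic -> (lebesgue_measure A <= (y - x)%:E)%E.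
Proof.
move=> xy Axy; apply: (@le_trans _ _ (lebesgue_measure `]x, y[%classic)).
  by rewrite /lebesgue_measure /lebesgue_stieltjes_measure /measure_extension; exact: le_mu_ext.
rewrite lebesgue_measure_itv /= lte_fin.
case: ltP => yx; first by rewrite -EFinD.
have -> : y = x by apply/eqP; rewrite eq_le xy yx.
by rewrite subrr.
Qed.

Lemma mistake_ranked_after (R : realType) (V : finType) (k : nat)
    (l : {set V} -> 'I_k) (xn : V -> 'I_k -> R) (dflt : V -> 'I_k)
    (e : {set V}) (rho : R) (pi : {perm 'I_k}) :
  (forall w, w \in e -> xn w (l e) < rho) ->
  mistake l (gen_color_round xn dflt rho pi) e ->
  exists2 w, w \in e & exists2 d, ((pi^-1)%g (l e) < (pi^-1)%g d)%N & xn w d < rho.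
Proof.
move=> below /existsP[w /andP[we Yw]]; exists w => //.
have rank_c := below w we.
move: Yw; rewrite /gen_color_round; case: pickP => [j /andP[hj /forallP last_j] | none] Yw.
  exists (pi j); rewrite ?permK //.
  case: (ltngtP ((pi^-1)%g (l e)) j) => // cj.
    by have := last_j ((pi^-1)%g (l e)); rewrite cj /= permKV rank_c.
  by move: Yw; rewrite -(val_inj cj) permKV eqxx.
have c_below : xn w (pi ((pi^-1)%g (l e))) < rho by rewrite permKV.
have [j hj j_max] := @arg_maxnP _ ((pi^-1)%g (l e)) (fun j => xn w (pi j) < rho)
  (fun j => j : nat) c_below.
move: (none j); rewrite hj /= => /negP; case; apply/forallP => j'.
by apply/implyP => jj'; apply/negP => /j_max /=; rewrite leqNgt jj'.
Qed.

Section MistakeProbability.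
Variables (R : realType) (V : finType) (k : nat) (l : {set V} -> 'I_k).
Variables (xn : V -> 'I_k -> R) (dflt : V -> 'I_k) (u v : V) (q : nat).
Hypothesis xn_le1 : forall w j, xn w j <= 1.

Local Notation e := [set u; v].
Local Notation c := (l [set u; v]).
Local Notation z := (color_thresholds xn u v c).
Local Notation cs := (sorted_colors xn u v c).

Hypotheses (xuc : xn u c <= 1 / 2) (xvc : xn v c <= 1 / 2).
Hypotheses (zq : z q <= 7 / 8) (zq1 : 7 / 8 <= z q.+1).

(* As z_(q+1) >= 7/8, a mistake forces rho > z_(J+1) with J < q. *)
Lemma measure_mistake_le (pi : {perm 'I_k}) :
  (lebesgue_measure [set rho : R | (1 / 2 < rho < 7 / 8)%R /\
      mistake l (gen_color_round xn dflt rho pi) e]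
   <= (7 / 8 - capped (7 / 8) z q (first_after pi c cs))%:E)%E.
Proof.
set J := first_after pi c cs.
apply: lebesgue_measure_sub_itv.
  by rewrite /capped; case: ltnP => // Jq; apply: le_trans zq; exact: color_thresholds_homo.
move=> rho [/andP[rho_gt rho_lt] mis].
have c_below w : w \in e -> xn w c < rho.
  by have := (xuc, xvc); rewrite !inE => -[hu hv] /orP[] /eqP ->; lra.
have [w we [d after_c d_below]] := mistake_ranked_after c_below mis.
have d_cs : d \in cs.
  by rewrite mem_sorted_colors; apply: contraTneq after_c => ->; rewrite ltnn.
have d_mincol : mincol xn u v d < rho.
  by move: we; rewrite !inE /mincol gt_min => /orP[] /eqP <-; rewrite d_below ?orbT.
set r := index d cs.
have r_lt : (r < k - 1)%N by rewrite -(size_sorted_colors xn u v c) index_mem.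
have zr : z r.+1 = mincol xn u v d by rewrite color_thresholdsS // nth_index.
have Jr : (J <= r)%N.
  rewrite leqNgt; apply/negP => /(before_find c).
  by rewrite nth_index // after_c.
have rq : (r < q)%N.
  rewrite ltnNge; apply/negP => qr.
  have := color_thresholds_homo u v c xn_le1 (i := q.+1) (j := r.+1) qr.
  by have := zq1; lra.
rewrite /= in_itv /= rho_lt andbT /capped (leq_ltn_trans Jr rq).
by apply: le_lt_trans d_mincol; rewrite -zr; exact: color_thresholds_homo.
Qed.

Lemma prob_mistake_le :
  (prob_mistake l xn dflt (1 / 2) (7 / 8) e <= (8 / 3 * threshold_bound (7 / 8) z q)%:E)%E.
Proof.
have qk : (q <= size cs)%N.
  by rewrite size_sorted_colors; apply: threshold_lt1_index; have := zq; lra.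
have c_cs : c \notin cs by rewrite mem_sorted_colors eqxx.
have sum_capped := sum_perm_capped (7 / 8) z (sorted_colors_uniq xn u v c) c_cs qk.
set N := #|{perm 'I_k}| in sum_capped *.
have N_gt0 : (0 : R) < N%:R by rewrite ltr0n /N card_Sn fact_gt0.
rewrite /prob_mistake.
apply: (@le_trans _ _ ((\sum_pi ((7 / 8 - capped (7 / 8) z q (first_after pi c cs))
                                  * (7 / 8 - 1 / 2)^-1)) * N%:R^-1)%:E).
  rewrite EFinM; apply: lee_wpmul2r; first by rewrite lee_fin invr_ge0 ltW.
  rewrite -sumEFin; apply: lee_sum => pi _; rewrite EFinM.
  by apply: lee_wpmul2r; [rewrite lee_fin invr_ge0; lra | exact: measure_mistake_le].
rewrite lee_fin -mulr_suml sum_capped.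
suff -> : N%:R * threshold_bound (7 / 8) z q * (7 / 8 - 1 / 2)^-1 / N%:R
          = 8 / 3 * threshold_bound (7 / 8) z q by [].
by field; rewrite lt0r_neq0.
Qed.

End MistakeProbability.

Theorem lemma4 (R : realType) (V : finType) (k : nat)
    (E : {set {set V}}) (l : {set V} -> 'I_k)
    (xn : V -> 'I_k -> R) (xe : {set V} -> R) (dflt : V -> 'I_k)
    (u v : V) (p q : nat) :
  is_edge_colored_graph E ->
  minecc_feasible E l xn xe ->
  u != v -> [set u; v] \in E ->
  xe [set u; v] = Num.max (xn u (l [set u; v])) (xn v (l [set u; v])) ->
  1 / 8 < xe [set u; v] < 1 / 2 ->
  (1 <= p <= q)%N ->
  color_thresholds xn u v (l [set u; v]) p.-1 <= 1 / 2 ->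
  1 / 2 <= color_thresholds xn u v (l [set u; v]) p ->
  color_thresholds xn u v (l [set u; v]) p <= color_thresholds xn u v (l [set u; v]) q ->
  color_thresholds xn u v (l [set u; v]) q <= 7 / 8 ->
  7 / 8 <= color_thresholds xn u v (l [set u; v]) q.+1 ->
  [/\ p = 1%N, (q <= 6)%N &
      (prob_mistake l xn dflt (1 / 2) (7 / 8) [set u; v]
       <= (8 / 3 * Aq R q * xe [set u; v])%:E)%E].
Proof.
move=> _ [xn_sum _ xn_box _] _ _ xe_max /andP[X_gt X_lt] /andP[p1 pq] zp1 _ _ zq zq1.
set X := xe _ in xe_max X_gt X_lt *.
have xn_le1 w j : xn w j <= 1 by case/andP: (xn_box w j).
have xuc : xn u (l [set u; v]) <= X by rewrite xe_max le_max lexx.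
have xvc : xn v (l [set u; v]) <= X by rewrite xe_max le_max lexx orbT.
have p_eq1 : p = 1%N.
  case: p p1 pq zp1 => [|[|p]] //= _ _ zp1.
  exfalso; have := one_sub_le_threshold xn_sum xn_box xuc xvc (i := p.+1) erefl.
  by lra.
have q_le6 := index_le6_of_threshold xn_sum xn_box xuc xvc X_lt zq.
split => //.
have q_range : (1 <= q <= 6)%N by rewrite (leq_trans p1 pq) q_le6.
have X_gt0 : 0 < X by lra.
have feas := Aq_feasible_thresholds xn_sum xn_box xuc xvc X_gt0 (ltW X_lt) zq.
have xuc_half : xn u (l [set u; v]) <= 1 / 2 by lra.
have xvc_half : xn v (l [set u; v]) <= 1 / 2 by lra.
apply: le_trans (prob_mistake_le dflt xn_le1 xuc_half xvc_half zq zq1) _.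
rewrite lee_fin -(divfK (lt0r_neq0 X_gt0) (threshold_bound _ _ _)) -Aq_objective_div.
by have := Aq_objective_le_Aq q_range feas; nra.
Qed.
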